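(* Let $F_{ij}$ ($0\le i\le m$, $0\le j\le n$) be a dual-convex $m\times n$ net in $I^3$ with faces $p_{kl}$ and metric dual $p^*_{kl}=(p^1_{kl},p^2_{kl},p^3_{kl})$, $0\le k<m$, $0\le l<n$. A collection $C_{kl}\in\mathbb{R}^3$ ($0\le k<m$, $0\le l<n$) is reciprocal-parallel to $F_{ij}$ if and only if $C_{kl}=(-c^2_{kl},c^1_{kl},h_{kl})$ for all $k,l$, where $c^*_{kl}=(c^1_{kl},c^2_{kl},c^3_{kl})$ is a collection of points, not all equal, Christoffel dual to $p^*_{kl}$, and the real numbers $h_{kl}$ satisfy, for all adjacent index pairs $(k,l),(k',l')$, $$h_{kl}-h_{k'l'}=(c^1_{kl}-c^1_{k'l'})\,p^2_{kl}-(c^2_{kl}-c^2_{k'l'})\,p^1_{kl}.$$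
   Context: $I^3$ is $\mathbb{R}^3$ with coordinates $(x,y,z)$; isotropic = parallel to the $z$-axis. Metric duality: non-isotropic plane $z=P^1x+P^2y-P^3$ $\leftrightarrow$ point $(P^1,P^2,P^3)$. An $m\times n$ net: points $F_{ij}$, $0\le i\le m,0\le j\le n$, with $F_{ij},F_{i+1,j},F_{i+1,j+1},F_{i,j+1}$ consecutive vertices of a convex planar quadrilateral (face $p_{ij}$) for all $0\le i<m,0\le j<n$. Boundary vertices: $i\in\{0,m\}$ or $j\in\{0,n\}$; consecutive faces around non-boundary $F_{ij}$: $p_{i-1,j-1},p_{i,j-1},p_{ij},p_{i-1,j}$. Convex 4-hedral angle with vertex $O$: union of rays from $O$ meeting a convex quadrilateral in a plane not through $O$; flat angles: rays through one side; admissible: isotropic line through $O$ meets its interior. Dual-convex: $m,n\ge2$ and at each non-boundary vertex the four consecutive face planes are planes of four consecutive flat angles of an admissible convex 4-hedral angle. The metric dual of a dual-convex net is the $(m-1)\times(n-1)$ net of points $p^*_{kl}$ dual to the face planes. A collection $C_{kl}$, $0\le k<m$, $0\le l<n$, not all equal, is reciprocal-parallel to $F_{ij}$ if $C_{i,j-1}C_{ij}\parallel F_{i+1,j}F_{ij}$ for all $0\le i<m,0<j<n$ and $C_{i-1,j}C_{ij}\parallel F_{i,j+1}F_{ij}$ for all $0<i<m,0\le j<n$. Index pairs are adjacent if they differ by $1$ in exactly one coordinate. Labeled quadrilaterals $ABCD$, $A'B'C'D'$ are dual if $AB\parallel A'B'$, $BC\parallel B'C'$, $CD\parallel C'D'$,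 $DA\parallel D'A'$, $AC\parallel B'D'$, $BD\parallel A'C'$; two collections indexed alike are Christoffel dual if corresponding faces (quadrilaterals on indices $(k,l),(k+1,l),(k+1,l+1),(k,l+1)$) are dual. *)

(* Points of I^3 = R^3 over an arbitrary real (ordered) field R. *)
From HB Require Import structures.
From mathcomp Require Import all_boot all_order all_algebra.
Set Implicit Arguments. Unset Strict Implicit. Unset Printing Implicit Defensive.
Import Order.TTheory GRing.Theory Num.Theory.
Local Open Scope ring_scope.

Section Defs.
Variable R : realFieldType.

Record pt := Pt { px : R; py : R; pz : R }.

Definition padd (u v : pt) : pt := Pt (px u + px v) (py u + py v) (pz u + pz v).
Definition psub (u v : pt) : pt := Pt (px u - px v) (py u - py v) (pz u - pz v).
Definition pscale (a : R) (u : pt) : pt := Pt (a * px u) (a * py u) (a * pz u).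
Definition cross (u v : pt) : pt :=
  Pt (py u * pz v - pz u * py v) (pz u * px v - px u * pz v) (px u * py v - py u * px v).
Definition dot (u v : pt) : R := px u * px v + py u * py v + pz u * pz v.
Definition pzero : pt := Pt 0 0 0.
(* isotropic direction *)
Definition e3 : pt := Pt 0 0 1.

(* the vectors u and v are parallel (linearly dependent; a zero vector is
   parallel to everything) *)
Definition parallel (u v : pt) : Prop := cross u v = pzero.
Definition seg_par (A B A' B' : pt) : Prop := parallel (psub B A) (psub B' A').

Definition collinear (A B C : pt) : Prop := parallel (psub B A) (psub C A).
Definition coplanar (A B C D : pt) : Prop :=
  dot (cross (psub B A) (psub C A)) (psub D A) = 0.

(* A, B, C, D are consecutive vertices of a (non-degenerate) convex planar
   quadrilateral: A, B, C are not collinear and the diagonals AC and BD meet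
   at a point interior to both of them. *)
Definition convex_quad (A B C D : pt) : Prop :=
  ~ collinear A B C /\
  exists s t : R, [/\ 0 < s < 1, 0 < t < 1 &
     padd A (pscale s (psub C A)) = padd B (pscale t (psub D B))].

Definition net (m n : nat) (F : nat -> nat -> pt) : Prop :=
  forall i j, (i < m)%N -> (j < n)%N ->
    convex_quad (F i j) (F i.+1 j) (F i.+1 j.+1) (F i j.+1).

(* the plane through the (non-collinear) points O, A, B is the plane of the
   face p_kl of the net F (i.e. contains its four vertices) *)
Definition plane_is_face (F : nat -> nat -> pt) (k l : nat) (O A B : pt) : Prop :=
  [/\ coplanar O A B (F k l), coplanar O A B (F k.+1 l),
      coplanar O A B (F k.+1 l.+1) & coplanar O A B (F k l.+1)].

(* At the vertex F_ij the four consecutive face planes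
   p_{i-1,j-1}, p_{i,j-1}, p_{ij}, p_{i-1,j} are the planes of four consecutive
   flat angles O Q1 Q2, O Q2 Q3, O Q3 Q4, O Q4 Q1 of an admissible convex
   4-hedral angle with vertex O (the rays from O through the convex
   quadrilateral Q1Q2Q3Q4 lying in a plane not through O). *)
Definition admissible_at (F : nat -> nat -> pt) (i j : nat) : Prop :=
  exists O Q1 Q2 Q3 Q4 : pt,
    [/\ convex_quad Q1 Q2 Q3 Q4, ~ coplanar Q1 Q2 Q3 O,
        [/\ plane_is_face F i.-1 j.-1 O Q1 Q2, plane_is_face F i j.-1 O Q2 Q3,
            plane_is_face F i j O Q3 Q4 & plane_is_face F i.-1 j O Q4 Q1] &
        (* admissibility: the isotropic line through O meets the interior
           of the angle, i.e. some point O + t (q - O), t > 0, q in the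
           interior of Q1Q2Q3Q4, lies on the line O + s e3 *)
        exists (s t a1 a2 a3 a4 : R),
          [/\ 0 < t, [/\ 0 < a1, 0 < a2, 0 < a3 & 0 < a4], a1 + a2 + a3 + a4 = 1 &
              padd O (pscale s e3) =
              padd O (pscale t (psub (padd (padd (pscale a1 Q1) (pscale a2 Q2))
                                      (padd (pscale a3 Q3) (pscale a4 Q4))) O))]].

Definition dual_convex (m n : nat) (F : nat -> nat -> pt) : Prop :=
  [/\ net m n F, (2 <= m)%N, (2 <= n)%N &
      forall i j, (0 < i < m)%N -> (0 < j < n)%N -> admissible_at F i j].

(* the point P = (P1,P2,P3) is metric dual to the non-isotropic plane
   z = P1 x + P2 y - P3; X lies on that plane *)
Definition on_dual_plane (P X : pt) : Prop :=
  pz X = px P * px X + py P * py X - pz P.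

Definition metric_dual (m n : nat) (F : nat -> nat -> pt) (p : nat -> nat -> pt) : Prop :=
  forall k l, (k < m)%N -> (l < n)%N ->
    [/\ on_dual_plane (p k l) (F k l), on_dual_plane (p k l) (F k.+1 l),
        on_dual_plane (p k l) (F k.+1 l.+1) & on_dual_plane (p k l) (F k l.+1)].

Definition not_all_equal (m n : nat) (C : nat -> nat -> pt) : Prop :=
  exists k l k' l', [/\ (k < m)%N, (l < n)%N, (k' < m)%N, (l' < n)%N &
                        C k l <> C k' l'].

Definition reciprocal_parallel (m n : nat) (F C : nat -> nat -> pt) : Prop :=
  [/\ not_all_equal m n C,
      (forall i j, (i < m)%N -> (0 < j < n)%N ->
         seg_par (C i j.-1) (C i j) (F i.+1 j) (F i j)) &
      (forall i j, (0 < i < m)%N -> (j < n)%N ->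
         seg_par (C i.-1 j) (C i j) (F i j.+1) (F i j))].

Definition dual_quads (A B C D A' B' C' D' : pt) : Prop :=
  [/\ seg_par A B A' B', seg_par B C B' C', seg_par C D C' D',
      seg_par D A D' A' & seg_par A C B' D' /\ seg_par B D A' C'].

Definition christoffel_dual (m n : nat) (P Q : nat -> nat -> pt) : Prop :=
  forall k l, (k.+1 < m)%N -> (l.+1 < n)%N ->
    dual_quads (P k l) (P k.+1 l) (P k.+1 l.+1) (P k l.+1)
               (Q k l) (Q k.+1 l) (Q k.+1 l.+1) (Q k l.+1).

Definition adjacent (m n k l k' l' : nat) : Prop :=
  [/\ (k < m)%N, (l < n)%N, (k' < m)%N, (l' < n)%N &
      (k == k' /\ (l' == l.+1 \/ l == l'.+1)) \/
      (l == l' /\ (k' == k.+1 \/ k == k'.+1))].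

End Defs.

From HB Require Import structures.
From mathcomp Require Import all_boot all_order all_algebra.
From mathcomp Require Import ring lra.
From Stdlib Require Import Classical.
Import Order.TTheory GRing.Theory Num.Theory.
Set Implicit Arguments. Unset Strict Implicit. Unset Printing Implicit Defensive.
Local Open Scope ring_scope.

(* Adjacent faces of a dual-convex net lie in non-parallel planes, because consecutive flat
   angles of a convex 4-hedral angle span different planes.  Hence a vector is parallel to an
   edge of the net iff it is a direction of both adjacent face planes.  For an edge C' - C of a
   reciprocal-parallel collection this says two things: its height difference is the pairing of
   its horizontal part with the gradient (p1, p2) of either face, which is the relation for h;
   and its horizontal part is orthogonal to that of p' - p, i.e. its quarter turn c' - c is
   horizontally parallel to p' - p.  The third coordinate of c is a potential for the moments
   of the C-edges about the vertices of the net.  With it, each quad of c lies in a plane of the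
   same slope as the plane (dual to the vertex) containing the corresponding quad of p, so
   parallelism of their edges and diagonals reduces to the horizontal parts.  Conversely,
   Christoffel duality makes c' - c parallel to p' - p and the relation for h puts C' - C in the
   plane dual to p; together they make C' - C parallel to the common edge. *)

(** * Vector algebra *)

Section Vectors.
Variable R : realFieldType.
Implicit Types (u v w a b c d e N X Y O : pt R) (x : R).

Definition triple a b c := dot (cross a b) c.

Lemma psub_eq0 a b : psub a b = pzero R -> a = b.
Proof.
case: a b => ? ? ? [? ? ?] [/eqP + /eqP + /eqP].
by rewrite !subr_eq0 => /eqP -> /eqP -> /eqP ->.
Qed.

Lemma parallelP u w : parallel u w <->
  [/\ py u * pz w - pz u * py w = 0, pz u * px w - px u * pz w = 0
    & px u * py w - py u * px w = 0].
Proof. by split; [case=> -> -> -> | case=> h1 h2 h3; rewrite /parallel /cross h1 h2 h3]. Qed.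

Lemma parallel_psubNN a b c d :
  parallel (psub a b) (psub c d) -> parallel (psub b a) (psub d c).
Proof. by rewrite !parallelP /psub /= => -[*]; split; lra. Qed.

Lemma cross_cross a b c :
  cross a (cross b c) = psub (pscale (dot a c) b) (pscale (dot a b) c).
Proof. by case: a b c => ? ? ? [? ? ?] [? ? ?]; rewrite /cross /dot /psub /pscale /=; congr Pt; ring. Qed.

Lemma dot_psub N X Y O : dot N (psub X Y) = dot N (psub X O) - dot N (psub Y O).
Proof. by case: N X Y O => ? ? ? [? ? ?] [? ? ?] [? ? ?]; rewrite /dot /psub /=; ring. Qed.

Lemma dot_self_eq0 u : dot u u = 0 -> u = pzero R.
Proof.
case: u => x y z; rewrite /dot /= => /eqP.
rewrite paddr_eq0 ?addr_ge0 ?sqr_ge0 // paddr_eq0 ?sqr_ge0 // !mulf_eq0 !orbb.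
by case/andP=> /andP[/eqP -> /eqP ->] /eqP ->.
Qed.

Lemma pscale_eq0 x u : pscale x u = pzero R -> x = 0 \/ u = pzero R.
Proof.
case: u => u1 u2 u3 [/eqP + /eqP + /eqP]; rewrite !mulf_eq0.
by case: (eqVneq x 0) => [|_ /eqP -> /eqP -> /eqP ->]; [left | right].
Qed.

Lemma parallel_dot_eq0 N u e : parallel u e -> e <> pzero R -> dot N e = 0 -> dot N u = 0.
Proof.
move=> ue ne Ne; suff /pscale_eq0 [] : pscale (dot N u) e = pzero R by [].
have := cross_cross N u e; rewrite ue Ne /cross /pzero /pscale /psub /= !mulr0 !mul0r !subrr.
by case: e {ne Ne ue} => ? ? ? [] *; congr Pt => /=; lra.
Qed.

Lemma parallel_trans a b c : parallel a c -> parallel b c -> c <> pzero R -> parallel a b.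
Proof.
move=> ac bc nc.
(* [(c.c) a = (c.a) c + c x (a x c)], and likewise for [b] *)
have key : pscale (dot c c ^+ 2) (cross a b) =
    cross (padd (pscale (dot c a) c) (cross c (cross a c)))
          (padd (pscale (dot c b) c) (cross c (cross b c))).
  by case: a b c {ac bc nc} => ? ? ? [? ? ?] [? ? ?];
    rewrite /cross /dot /padd /pscale /=; congr Pt; ring.
have /pscale_eq0 [|//] : pscale (dot c c ^+ 2) (cross a b) = pzero R.
  by rewrite key ac bc; case: c {ac bc nc key} => ? ? ?;
    rewrite /cross /dot /padd /pscale /pzero /=; congr Pt; ring.
by move/eqP; rewrite sqrf_eq0 => /eqP /dot_self_eq0.
Qed.

Lemma dot_orth_parallel N v w : dot N v = 0 -> dot N w = 0 -> parallel N (cross v w).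
Proof.
move=> Nv Nw; rewrite /parallel cross_cross Nv Nw.
by case: v w {Nv Nw} => ? ? ? [? ? ?]; rewrite /psub /pscale /pzero /=; congr Pt; ring.
Qed.

Lemma normals_parallel N N' v w : dot N v = 0 -> dot N w = 0 ->
  dot N' v = 0 -> dot N' w = 0 -> cross v w <> pzero R -> parallel N N'.
Proof.
move=> Nv Nw N'v N'w nvw.
by apply: (parallel_trans (c := cross v w)) => //; apply: dot_orth_parallel.
Qed.

Lemma cross_parallel_z u X Y : parallel u (psub X Y) -> pz (cross X u) = pz (cross Y u).
Proof. by move/parallelP=> [_ _]; rewrite /psub /= => h; lra. Qed.

Lemma triple_scaler a b c x : triple a b (pscale x c) = x * triple a b c.
Proof. by case: a b c => ? ? ? [? ? ?] [? ? ?]; rewrite /triple /dot /cross /pscale /=; ring. Qed.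

Lemma triple_cyclic a b c : triple a b c = triple c a b.
Proof. by case: a b c => ? ? ? [? ? ?] [? ? ?]; rewrite /triple /dot /cross /=; ring. Qed.

Lemma triple_cross_parallel a b c : parallel (cross a b) (cross b c) -> triple a b c = 0.
Proof.
move=> abc; apply/eqP; rewrite -sqrf_eq0; apply/eqP.
have <- : dot (cross (cross a b) (cross b c)) (cross c a) = triple a b c ^+ 2.
  by case: a b c {abc} => ? ? ? [? ? ?] [? ? ?]; rewrite /triple /dot /cross /=; ring.
by rewrite abc /dot /= !mul0r !addr0.
Qed.

Lemma triple_combination u1 u2 u3 u4 s t :
  pscale t u4 = padd (psub (pscale (1 - s) u1) (pscale (1 - t) u2)) (pscale s u3) ->
  [/\ t * triple u2 u3 u4 = (1 - s) * triple u1 u2 u3,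
      t * triple u3 u4 u1 = (1 - t) * triple u1 u2 u3
    & t * triple u4 u1 u2 = s * triple u1 u2 u3].
Proof.
move=> E; rewrite (triple_cyclic u3 u4) (triple_cyclic u4 u1) (triple_cyclic u2 u4).
rewrite -(triple_scaler u2 u3 u4) -(triple_scaler u1 u3 u4) -(triple_scaler u1 u2 u4) E.
by split; case: u1 u2 u3 {E} => ? ? ? [? ? ?] [? ? ?];
  rewrite /triple /dot /cross /padd /psub /pscale /=; ring.
Qed.

Lemma not_collinear_neq (A B C : pt R) : ~ collinear A B C -> A <> B /\ B <> C.
Proof.
rewrite /collinear /parallel => h; split=> E; apply: h; rewrite E;
  by case: A B C {E} => ? ? ? [? ? ?] [? ? ?]; rewrite /cross /psub /pzero /=; congr Pt; ring.
Qed.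

Lemma coplanar_triple Q1 Q2 Q3 O :
  coplanar Q1 Q2 Q3 O <-> triple (psub Q1 O) (psub Q2 O) (psub Q3 O) = 0.
Proof.
rewrite /coplanar; suff -> : dot (cross (psub Q2 Q1) (psub Q3 Q1)) (psub O Q1) =
    - triple (psub Q1 O) (psub Q2 O) (psub Q3 O).
  by split=> /eqP; rewrite ?oppr_eq0 => /eqP // ->; rewrite oppr0.
by case: Q1 Q2 Q3 O => ? ? ? [? ? ?] [? ? ?] [? ? ?];
  rewrite /triple /dot /cross /psub /=; ring.
Qed.

Lemma convex_angle_triple O Q1 Q2 Q3 Q4 :
  convex_quad Q1 Q2 Q3 Q4 -> ~ coplanar Q1 Q2 Q3 O ->
  let u1 := psub Q1 O in let u2 := psub Q2 O in
  let u3 := psub Q3 O in let u4 := psub Q4 O in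
  [/\ triple u1 u2 u3 <> 0, triple u2 u3 u4 <> 0,
      triple u3 u4 u1 <> 0 & triple u4 u1 u2 <> 0].
Proof.
move=> [_ [s [t [/andP [s0 s1] /andP [t0 t1] diag]]]] ncop u1 u2 u3 u4.
have T0 : triple u1 u2 u3 <> 0 by move=> T0; apply/ncop/coplanar_triple.
have E : pscale t u4 = padd (psub (pscale (1 - s) u1) (pscale (1 - t) u2)) (pscale s u3).
  move: diag; rewrite /u1 /u2 /u3 /u4; clear.
  by case: Q1 Q2 Q3 Q4 O => ? ? ? [? ? ?] [? ? ?] [? ? ?] [? ? ?];
    rewrite /padd /psub /pscale /= => -[*]; congr Pt; lra.
have nz x y : x != 0 -> t * y = x * triple u1 u2 u3 -> y <> 0.
  by move=> /negbTE x0 + y0; rewrite y0 mulr0 => /esym/eqP; rewrite mulf_eq0 x0 => /eqP.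
have [E2 E3 E4] := triple_combination E.
split=> //; [apply: nz E2 | apply: nz E3 | apply: nz E4];
  by rewrite ?subr_eq0 eq_sym lt_eqF.
Qed.

End Vectors.

(** * Planes dual to points *)

Section DualPlanes.
Variable R : realFieldType.
Implicit Types (u w a b c e q P X Y : pt R) (x z : R).

Definition isotropic u := parallel u (e3 R).

Definition plane_dir P u := pz u = px P * px u + py P * py u.

Definition dual_normal P := Pt (px P) (py P) (-1).

Definition turn c z := Pt (- py c) (px c) z.

Definition unturn c z := Pt (py c) (- px c) z.

Lemma unturnK c z : turn (unturn c z) (pz c) = c.
Proof. by case: c => ? ? ?; rewrite /turn /unturn /= opprK. Qed.

Lemma isotropicP u : isotropic u <-> px u = 0 /\ py u = 0.
Proof.
rewrite /isotropic parallelP /= !mulr0 !mulr1 !subr0 sub0r.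
split=> [[-> /eqP]|[-> ->]]; last by rewrite oppr0.
by rewrite oppr_eq0 => /eqP.
Qed.

Lemma not_isotropic_mul0 x q : ~ isotropic q -> x * px q = 0 -> x * py q = 0 -> x = 0.
Proof.
move=> nq /eqP + /eqP; rewrite !mulf_eq0 => /orP[/eqP //|/eqP qx] /orP[/eqP //|/eqP qy].
by case: nq; apply/isotropicP.
Qed.

Lemma isotropic_psub P P' : isotropic (psub P' P) <-> dual_normal P' = dual_normal P.
Proof.
rewrite isotropicP /psub /dual_normal /=.
split=> [[/eqP + /eqP]|[-> ->]]; last by rewrite !subrr.
by rewrite !subr_eq0 => /eqP -> /eqP ->.
Qed.

Lemma dual_normal_neq0 P : dual_normal P <> pzero R.
Proof. by case=> _ _ /eqP; rewrite oppr_eq0 oner_eq0. Qed.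

Lemma unturn_eq_isotropic u u' z z' : unturn u z = unturn u' z' -> isotropic (psub u u').
Proof. by rewrite isotropicP /= => -[-> /eqP]; rewrite eqr_opp => /eqP -> _; rewrite !subrr. Qed.

Lemma turn_eq_isotropic u u' z z' : turn u z = turn u' z' -> isotropic (psub u u').
Proof. by rewrite isotropicP /= => -[/eqP + ->]; rewrite eqr_opp => /eqP -> _; rewrite !subrr. Qed.

Lemma dual_normal_neq P P' a b c :
  parallel (cross a b) (dual_normal P) -> parallel (cross b c) (dual_normal P') ->
  triple a b c <> 0 -> dual_normal P <> dual_normal P'.
Proof.
move=> hab hbc habc E; apply/habc/triple_cross_parallel.
apply: (parallel_trans hab); last exact: dual_normal_neq0.
by rewrite E.
Qed.

Lemma plane_dirE P u : plane_dir P u <-> dot (dual_normal P) u = 0.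
Proof. by rewrite /plane_dir /dot /=; split=> h; lra. Qed.

Lemma plane_dirN P X Y : plane_dir P (psub X Y) -> plane_dir P (psub Y X).
Proof. by rewrite /plane_dir /psub /= => h; lra. Qed.

Lemma on_dual_plane_dir P X Y :
  on_dual_plane P X -> on_dual_plane P Y -> plane_dir P (psub X Y).
Proof. by rewrite /on_dual_plane /plane_dir /psub /= => hX hY; lra. Qed.

Lemma parallel_plane_dir P u e :
  parallel u e -> e <> pzero R -> plane_dir P e -> plane_dir P u.
Proof. by rewrite !plane_dirE; apply: parallel_dot_eq0. Qed.

Lemma plane_dir_parallel P u w :
  plane_dir P u -> plane_dir P w -> pz (cross u w) = 0 -> parallel u w.
Proof.
rewrite /plane_dir /= => hu hw hz; apply/parallelP; rewrite hu hw; split=> //.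
  by transitivity (- px P * (px u * py w - py u * px w)); [ring | rewrite hz mulr0].
by transitivity (- py P * (px u * py w - py u * px w)); [ring | rewrite hz mulr0].
Qed.

Lemma plane_dir_isotropic P u : plane_dir P u -> isotropic u -> u = pzero R.
Proof. by case: u => x y z; rewrite isotropicP /plane_dir /= => -> [-> ->]; rewrite !mulr0 addr0. Qed.

Lemma isotropic_parallel_eq0 q u :
  parallel q u -> ~ isotropic q -> isotropic u -> u = pzero R.
Proof.
case: u => x y z /parallelP [/= h1 h2 _] nq /isotropicP [/= x0 y0].
rewrite x0 y0 in h1 h2 *; congr Pt; apply: (not_isotropic_mul0 nq); lra.
Qed.

Lemma plane_dir_turn P c c' h h' :
  plane_dir P (psub (turn c h) (turn c' h')) <->
  h - h' = (px c - px c') * py P - (py c - py c') * px P.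
Proof. by rewrite /plane_dir /turn /psub /=; split=> e; lra. Qed.

Lemma plane_dir_unturn P X Y z z' :
  plane_dir P (psub X Y) <->
  pz X - pz Y = (px (unturn X z) - px (unturn Y z')) * py P
                - (py (unturn X z) - py (unturn Y z')) * px P.
Proof. by rewrite /plane_dir /unturn /psub /=; split=> e; lra. Qed.

Lemma turn_parallel P P' c c' e h h' :
  parallel (psub P' P) (psub c' c) -> ~ isotropic (psub P' P) ->
  plane_dir P e -> plane_dir P' e -> plane_dir P (psub (turn c' h') (turn c h)) ->
  parallel (psub (turn c' h') (turn c h)) e.
Proof.
rewrite /plane_dir => /parallelP [_ _ qd] nq Pe P'e hP.
apply: (plane_dir_parallel hP Pe).
rewrite /psub /= in qd nq *.
(* c' - c is horizontally parallel to P' - P, which is horizontally orthogonal to e. *)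
set s := (px c' - px c) * px e + (py c' - py c) * py e.
have qe : (px P' - px P) * px e + (py P' - py P) * py e = 0 by lra.
have s0 : s = 0.
  apply: (not_isotropic_mul0 nq) => /=.
    transitivity ((px c' - px c) * ((px P' - px P) * px e + (py P' - py P) * py e)
      + py e * ((px P' - px P) * (py c' - py c) - (py P' - py P) * (px c' - px c))).
      by rewrite /s; ring.
    by rewrite qe qd !mulr0 addr0.
  transitivity ((py c' - py c) * ((px P' - px P) * px e + (py P' - py P) * py e)
    - px e * ((px P' - px P) * (py c' - py c) - (py P' - py P) * (px c' - px c))).
    by rewrite /s; ring.
  by rewrite qe qd !mulr0 subr0.
by transitivity (- s); [rewrite /s; ring | rewrite s0 oppr0].
Qed.

Lemma reciprocal_quad (V PA PB PC PD CA CB CC CD : pt R) (zA zB zC zD : R) :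
  on_dual_plane PA V -> on_dual_plane PB V -> on_dual_plane PC V -> on_dual_plane PD V ->
  zB - zA = pz (cross V (psub CB CA)) -> zC - zB = pz (cross V (psub CC CB)) ->
  zD - zA = pz (cross V (psub CD CA)) ->
  plane_dir PA (psub CB CA) -> plane_dir PB (psub CB CA) ->
  plane_dir PB (psub CC CB) -> plane_dir PC (psub CC CB) ->
  plane_dir PD (psub CC CD) -> plane_dir PC (psub CC CD) ->
  plane_dir PA (psub CD CA) -> plane_dir PD (psub CD CA) ->
  dual_quads PA PB PC PD (unturn CA zA) (unturn CB zB) (unturn CC zC) (unturn CD zD).
Proof.
(* The p's lie on the plane dual to V and the heights z put the c's on a plane of the same
   slope, so each parallelism reduces to horizontal components.  For an edge this is the
   orthogonality of p' - p to the common C-edge; for a diagonal it also uses that the height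
   differences of the four C-edges sum to zero around the quad. *)
rewrite /on_dual_plane /plane_dir /cross /unturn /psub /= => *.
rewrite /dual_quads /seg_par; split; [| | | | split];
  apply: (plane_dir_parallel (P := V)); rewrite /plane_dir /cross /psub /=; lra.
Qed.

End DualPlanes.

(** * Index grids *)

Lemma grid_const (T : Type) (m n : nat) (f : nat -> nat -> T) :
  (forall k l, (k.+1 < m)%N -> (l < n)%N -> f k.+1 l = f k l) ->
  (forall k l, (k < m)%N -> (l.+1 < n)%N -> f k l.+1 = f k l) ->
  forall k l, (k < m)%N -> (l < n)%N -> f k l = f 0%N 0%N.
Proof.
move=> fk fl; elim=> [|k IHk] l hk hl; last by rewrite fk // IHk // ltnW.
by elim: l hl => [|l IHl] hl //; rewrite fl // IHl // ltnW.
Qed.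

Lemma grid_potential (V : zmodType) (m n : nat) (dk dl : nat -> nat -> V) :
  (forall k l, (k.+1 < m)%N -> (l.+1 < n)%N -> dk k l + dl k.+1 l = dl k l + dk k l.+1) ->
  exists f : nat -> nat -> V,
    (forall k l, (k.+1 < m)%N -> (l < n)%N -> f k.+1 l = f k l + dk k l) /\
    (forall k l, f k l.+1 = f k l + dl k l).
Proof.
move=> closed.
pose f k l := \sum_(i < k) dk i 0%N + \sum_(j < l) dl k j.
have fl k l : f k l.+1 = f k l + dl k l by rewrite /f big_ord_recr addrA.
exists f; split=> // k; elim=> [|l IHl] hk hl.
  by rewrite /f !big_ord0 big_ord_recr !addr0.
by rewrite !fl IHl ?(ltnW hl) // -addrA closed // addrA.
Qed.

Lemma not_all_equal_transfer (R : realFieldType) (m n : nat) (C D : nat -> nat -> pt R) :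
  (forall k l, (k.+1 < m)%N -> (l < n)%N -> D k.+1 l = D k l -> C k.+1 l = C k l) ->
  (forall k l, (k < m)%N -> (l.+1 < n)%N -> D k l.+1 = D k l -> C k l.+1 = C k l) ->
  not_all_equal m n C -> not_all_equal m n D.
Proof.
move=> Ck Cl [a [b [a' [b' [ha hb ha' hb' neq]]]]]; apply: NNPP => Dconst.
have D_eq k l k' l' : (k < m)%N -> (l < n)%N -> (k' < m)%N -> (l' < n)%N ->
    D k l = D k' l'.
  by move=> *; apply: NNPP => ne; apply: Dconst; exists k, l, k', l'.
have C00 := grid_const (fun k l hk hl => Ck k l hk hl (D_eq _ _ _ _ hk hl (ltnW hk) hl))
                       (fun k l hk hl => Cl k l hk hl (D_eq _ _ _ _ hk hl hk (ltnW hl))).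
by apply: neq; rewrite (C00 a b) // (C00 a' b').
Qed.

Lemma christoffel_edge_k (R : realFieldType) (m n : nat) (P Q : nat -> nat -> pt R) k l :
  christoffel_dual m n P Q -> (2 <= n)%N -> (k.+1 < m)%N -> (l < n)%N ->
  parallel (psub (P k.+1 l) (P k l)) (psub (Q k.+1 l) (Q k l)).
Proof.
move=> PQ n2 hk hl; case: (ltnP l.+1 n) => [hl'|].
  by case: (PQ k l hk hl').
case: l hl => [|l] hl hl'; first by move: (leq_trans n2 hl').
by case: (PQ k l hk hl) => _ _ /parallel_psubNN.
Qed.

Lemma christoffel_edge_l (R : realFieldType) (m n : nat) (P Q : nat -> nat -> pt R) k l :
  christoffel_dual m n P Q -> (2 <= m)%N -> (k < m)%N -> (l.+1 < n)%N ->
  parallel (psub (P k l.+1) (P k l)) (psub (Q k l.+1) (Q k l)).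
Proof.
move=> PQ m2 hk hl; case: (ltnP k.+1 m) => [hk'|].
  by case: (PQ k l hk' hl) => _ _ _ /parallel_psubNN.
case: k hk => [|k] hk hk'; first by move: (leq_trans m2 hk').
by case: (PQ k l hk hl).
Qed.

(** * Dual-convex nets *)

Section DualConvexNet.
Variables (R : realFieldType) (m n : nat) (F p : nat -> nat -> pt R).
Hypothesis hF : dual_convex m n F.
Hypothesis hp : metric_dual m n F p.

Let hn : net m n F. Proof. by case: hF. Qed.

Definition edge_k k l := psub (F k.+1 l) (F k.+1 l.+1).

Definition edge_l k l := psub (F k l.+1) (F k.+1 l.+1).

Lemma edge_k_spec k l : (k.+1 < m)%N -> (l < n)%N ->
  [/\ edge_k k l <> pzero R, plane_dir (p k l) (edge_k k l)
    & plane_dir (p k.+1 l) (edge_k k l)].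
Proof.
move=> hk hl; have [_ b c _] := hp (ltnW hk) hl; have [a _ _ d] := hp hk hl.
split; [|exact: on_dual_plane_dir b c|exact: on_dual_plane_dir a d].
have [ncol _] := hn (ltnW hk) hl.
by have [_ BC] := not_collinear_neq ncol; move/psub_eq0.
Qed.

Lemma edge_l_spec k l : (k < m)%N -> (l.+1 < n)%N ->
  [/\ edge_l k l <> pzero R, plane_dir (p k l) (edge_l k l)
    & plane_dir (p k l.+1) (edge_l k l)].
Proof.
move=> hk hl; have [_ _ c d] := hp hk (ltnW hl); have [a b _ _] := hp hk hl.
split; [|exact: on_dual_plane_dir d c|exact: on_dual_plane_dir a b].
have [ncol _] := hn hk hl.
by have [AB _] := not_collinear_neq ncol; move/psub_eq0.
Qed.

Lemma face_normal_parallel k l O A B : (k < m)%N -> (l < n)%N ->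
  plane_is_face F k l O A B ->
  parallel (cross (psub A O) (psub B O)) (dual_normal (p k l)).
Proof.
move=> hk hl [c1 c2 c3 _]; have [ncol _] := hn hk hl; have [o1 o2 o3 _] := hp hk hl.
apply: (normals_parallel (v := psub (F k.+1 l) (F k l)) (w := psub (F k.+1 l.+1) (F k l))).
- by rewrite (dot_psub _ _ _ O) c2 c1 subrr.
- by rewrite (dot_psub _ _ _ O) c3 c1 subrr.
- exact/plane_dirE/on_dual_plane_dir.
- exact/plane_dirE/on_dual_plane_dir.
- exact: ncol.
Qed.

Lemma consecutive_face_planes i j : (0 < i < m)%N -> (0 < j < n)%N ->
  [/\ dual_normal (p i.-1 j.-1) <> dual_normal (p i j.-1),
      dual_normal (p i j.-1) <> dual_normal (p i j),
      dual_normal (p i j) <> dual_normal (p i.-1 j)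
    & dual_normal (p i.-1 j) <> dual_normal (p i.-1 j.-1)].
Proof.
move=> hi hj; have [_ _ _ adm] := hF.
have [O [Q1 [Q2 [Q3 [Q4 [cq ncop [f1 f2 f3 f4] _]]]]]] := adm i j hi hj.
case/andP: hi => _ im; case/andP: hj => _ jn.
have im' : (i.-1 < m)%N := leq_ltn_trans (leq_pred i) im.
have jn' : (j.-1 < n)%N := leq_ltn_trans (leq_pred j) jn.
have n1 := face_normal_parallel im' jn' f1; have n2 := face_normal_parallel im jn' f2.
have n3 := face_normal_parallel im jn f3; have n4 := face_normal_parallel im' jn f4.
have [t1 t2 t3 t4] := convex_angle_triple cq ncop.
by split; [apply: dual_normal_neq n1 n2 t1 | apply: dual_normal_neq n2 n3 t2
         | apply: dual_normal_neq n3 n4 t3 | apply: dual_normal_neq n4 n1 t4].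
Qed.

Lemma nonisotropic_dual_k k l : (k.+1 < m)%N -> (l < n)%N -> ~ isotropic (psub (p k.+1 l) (p k l)).
Proof.
move=> hk hl; rewrite isotropic_psub; have [_ _ n2 _] := hF.
case: (ltnP l.+1 n) => [hl'|].
  by have [+ _ _ _] := consecutive_face_planes (i := k.+1) (j := l.+1) hk hl' => ne /esym.
case: l hl => [|l] hl hl'; first by move: (leq_trans n2 hl').
by have [_ _ + _] := consecutive_face_planes (i := k.+1) (j := l.+1) hk hl.
Qed.

Lemma nonisotropic_dual_l k l : (k < m)%N -> (l.+1 < n)%N -> ~ isotropic (psub (p k l.+1) (p k l)).
Proof.
move=> hk hl; rewrite isotropic_psub; have [_ m2 _ _] := hF.
case: (ltnP k.+1 m) => [hk'|].
  by have [_ _ _ +] := consecutive_face_planes (i := k.+1) (j := l.+1) hk' hl.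
case: k hk => [|k] hk hk'; first by move: (leq_trans m2 hk').
by have [_ + _ _] := consecutive_face_planes (i := k.+1) (j := l.+1) hk hl => ne /esym.
Qed.

Section ReciprocalToChristoffel.
Variable C : nat -> nat -> pt R.
Hypothesis hC : reciprocal_parallel m n F C.

Lemma rp_parallel_k k l : (k.+1 < m)%N -> (l < n)%N ->
  parallel (psub (C k.+1 l) (C k l)) (edge_k k l).
Proof. by move=> hk hl; case: hC => _ _ /(_ k.+1 l hk hl). Qed.

Lemma rp_parallel_l k l : (k < m)%N -> (l.+1 < n)%N ->
  parallel (psub (C k l.+1) (C k l)) (edge_l k l).
Proof. by move=> hk hl; case: hC => _ /(_ k l.+1 hk hl). Qed.

Lemma rp_plane_dir_k k l : (k.+1 < m)%N -> (l < n)%N ->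
  plane_dir (p k l) (psub (C k.+1 l) (C k l)) /\ plane_dir (p k.+1 l) (psub (C k.+1 l) (C k l)).
Proof.
move=> hk hl; have [ne e1 e2] := edge_k_spec hk hl.
by split; apply: parallel_plane_dir (rp_parallel_k hk hl) ne _.
Qed.

Lemma rp_plane_dir_l k l : (k < m)%N -> (l.+1 < n)%N ->
  plane_dir (p k l) (psub (C k l.+1) (C k l)) /\ plane_dir (p k l.+1) (psub (C k l.+1) (C k l)).
Proof.
move=> hk hl; have [ne e1 e2] := edge_l_spec hk hl.
by split; apply: parallel_plane_dir (rp_parallel_l hk hl) ne _.
Qed.

Lemma rp_plane_dir_adjacent k l k' l' : adjacent m n k l k' l' ->
  plane_dir (p k l) (psub (C k l) (C k' l')).
Proof.
move=> [hk hl hk' hl' [[/eqP <- [/eqP el|/eqP el]] | [/eqP <- [/eqP ek|/eqP ek]]]]; subst.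
- by apply/plane_dirN; case: (rp_plane_dir_l hk hl').
- by case: (rp_plane_dir_l hk hl).
- by apply/plane_dirN; case: (rp_plane_dir_k hk' hl).
- by case: (rp_plane_dir_k hk hl).
Qed.

Lemma rp_moment_k k l : (k.+1 < m)%N -> (l < n)%N ->
  pz (cross (F k.+1 l) (psub (C k.+1 l) (C k l))) =
  pz (cross (F k.+1 l.+1) (psub (C k.+1 l) (C k l))).
Proof. by move=> hk hl; apply/cross_parallel_z/rp_parallel_k. Qed.

Lemma rp_moment_l k l : (k < m)%N -> (l.+1 < n)%N ->
  pz (cross (F k l.+1) (psub (C k l.+1) (C k l))) =
  pz (cross (F k.+1 l.+1) (psub (C k l.+1) (C k l))).
Proof. by move=> hk hl; apply/cross_parallel_z/rp_parallel_l. Qed.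

Lemma rp_potential : exists phi : nat -> nat -> R,
  (forall k l, (k.+1 < m)%N -> (l < n)%N ->
     phi k.+1 l = phi k l + pz (cross (F k.+1 l.+1) (psub (C k.+1 l) (C k l)))) /\
  (forall k l, phi k l.+1 = phi k l + pz (cross (F k.+1 l.+1) (psub (C k l.+1) (C k l)))).
Proof.
apply: grid_potential => k l hk hl.
(* Each C-edge has the same moment about both ends of its F-edge, so all four moments can be
   taken about F_(k+1,l+1), and the four C-edges form a closed loop. *)
rewrite -(rp_moment_l hk hl) -(rp_moment_k hk hl).
by rewrite /cross /psub /=; ring.
Qed.

Lemma rp_christoffel_dual : exists phi : nat -> nat -> R,
  christoffel_dual m n p (fun k l => unturn (C k l) (phi k l)).
Proof.
have [phi [phik phil]] := rp_potential; exists phi => k l hk hl.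
have hk0 := ltnW hk; have hl0 := ltnW hl.
have [_ _ a _] := hp hk0 hl0; have [_ _ _ b] := hp hk hl0.
have [c _ _ _] := hp hk hl; have [_ d _ _] := hp hk0 hl.
have [AB1 AB2] := rp_plane_dir_k hk hl0; have [BC1 BC2] := rp_plane_dir_l hk hl.
have [DC1 DC2] := rp_plane_dir_k hk hl; have [AD1 AD2] := rp_plane_dir_l hk0 hl.
apply: (reciprocal_quad a b c d) => //.
- by rewrite phik // addrC addKr.
- by rewrite phil addrC addKr (rp_moment_l hk hl).
- by rewrite phil addrC addKr.
Qed.

Lemma rp_not_all_equal (phi : nat -> nat -> R) :
  not_all_equal m n (fun k l => unturn (C k l) (phi k l)).
Proof.
have [nae _ _] := hC; apply: (not_all_equal_transfer _ _ nae) => k l hk hl;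
  move/unturn_eq_isotropic=> iso; apply/psub_eq0.
  exact: plane_dir_isotropic (rp_plane_dir_k hk hl).1 iso.
exact: plane_dir_isotropic (rp_plane_dir_l hk hl).1 iso.
Qed.

End ReciprocalToChristoffel.

Section ChristoffelToReciprocal.
Variables (c : nat -> nat -> pt R) (h : nat -> nat -> R).
Hypothesis hc_neq : not_all_equal m n c.
Hypothesis hc : christoffel_dual m n p c.
Hypothesis hh : forall k l k' l', adjacent m n k l k' l' ->
  h k l - h k' l' =
  (px (c k l) - px (c k' l')) * py (p k l) - (py (c k l) - py (c k' l')) * px (p k l).

Lemma cd_plane_dir_k k l : (k.+1 < m)%N -> (l < n)%N ->
  plane_dir (p k l) (psub (turn (c k.+1 l) (h k.+1 l)) (turn (c k l) (h k l))).
Proof.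
move=> hk hl; apply/plane_dirN/plane_dir_turn/hh.
split=> //; first exact: ltnW.
by right; rewrite !eqxx; split; [|left].
Qed.

Lemma cd_plane_dir_l k l : (k < m)%N -> (l.+1 < n)%N ->
  plane_dir (p k l) (psub (turn (c k l.+1) (h k l.+1)) (turn (c k l) (h k l))).
Proof.
move=> hk hl; apply/plane_dirN/plane_dir_turn/hh.
split=> //; first exact: ltnW.
by left; rewrite !eqxx; split; [|left].
Qed.

Lemma cd_parallel_k k l : (k.+1 < m)%N -> (l < n)%N ->
  parallel (psub (turn (c k.+1 l) (h k.+1 l)) (turn (c k l) (h k l))) (edge_k k l).
Proof.
move=> hk hl; have [_ _ n2 _] := hF; have [_ e1 e2] := edge_k_spec hk hl.
exact: turn_parallel (christoffel_edge_k hc n2 hk hl) (nonisotropic_dual_k hk hl) e1 e2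
  (cd_plane_dir_k hk hl).
Qed.

Lemma cd_parallel_l k l : (k < m)%N -> (l.+1 < n)%N ->
  parallel (psub (turn (c k l.+1) (h k l.+1)) (turn (c k l) (h k l))) (edge_l k l).
Proof.
move=> hk hl; have [_ m2 _ _] := hF; have [_ e1 e2] := edge_l_spec hk hl.
exact: turn_parallel (christoffel_edge_l hc m2 hk hl) (nonisotropic_dual_l hk hl) e1 e2
  (cd_plane_dir_l hk hl).
Qed.

Lemma cd_reciprocal_parallel C :
  (forall k l, (k < m)%N -> (l < n)%N -> C k l = turn (c k l) (h k l)) ->
  reciprocal_parallel m n F C.
Proof.
move=> hC; have [_ m2 n2 _] := hF; split.
- apply: (not_all_equal_transfer _ _ hc_neq) => k l hk hl.
    rewrite (hC _ _ hk hl) (hC _ _ (ltnW hk) hl) => /turn_eq_isotropic iso.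
    apply/psub_eq0/(isotropic_parallel_eq0 (christoffel_edge_k hc n2 hk hl)) => //.
    exact: nonisotropic_dual_k.
  rewrite (hC _ _ hk hl) (hC _ _ hk (ltnW hl)) => /turn_eq_isotropic iso.
  apply/psub_eq0/(isotropic_parallel_eq0 (christoffel_edge_l hc m2 hk hl)) => //.
  exact: nonisotropic_dual_l.
- move=> i [|l] // hi /andP [_ hl].
  by rewrite (hC _ _ hi hl) (hC _ _ hi (ltnW hl)); apply: cd_parallel_l.
- move=> [|k] // j /andP [_ hk] hj.
  by rewrite (hC _ _ hk hj) (hC _ _ (ltnW hk) hj); apply: cd_parallel_k.
Qed.

End ChristoffelToReciprocal.

End DualConvexNet.

Theorem lemma8 (R : realFieldType) (m n : nat) (F p : nat -> nat -> pt R)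
  (hF : dual_convex m n F) (hp : metric_dual m n F p)
  (C : nat -> nat -> pt R) :
  reciprocal_parallel m n F C <->
  exists (c : nat -> nat -> pt R) (h : nat -> nat -> R),
    [/\ not_all_equal m n c,
        christoffel_dual m n p c,
        (forall k l, (k < m)%N -> (l < n)%N ->
           C k l = Pt (- py (c k l)) (px (c k l)) (h k l)) &
        (forall k l k' l', adjacent m n k l k' l' ->
           h k l - h k' l' =
           (px (c k l) - px (c k' l')) * py (p k l)
           - (py (c k l) - py (c k' l')) * px (p k l))].
Proof.
split=> [hC | [c [h [c_neq hc hC hh]]]]; last first.
  by apply: (cd_reciprocal_parallel hF hp c_neq hc hh) => k l hk hl; apply: hC.
have [phi hphi] := rp_christoffel_dual hF hp hC.
exists (fun k l => unturn (C k l) (phi k l)), (fun k l => pz (C k l)); split=> //.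
- exact (rp_not_all_equal hF hp hC phi).
- by move=> k l _ _; exact: esym (unturnK _ _).
move=> k l k' l' /(rp_plane_dir_adjacent hF hp hC).
exact: (plane_dir_unturn _ _ _ (phi k l) (phi k' l')).1.
Qed.
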